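(* Let $\mathcal C$ be a hyper-extensive category with finite products and terminal object $1$, and let $N=\coprod_{n<\omega}1$. Then $N$, with $\mathrm{inj}_0\colon1\to N$ and $[\mathrm{inj}_{n+1}]_{n<\omega}\colon N\to N$, is a natural numbers object (an initial algebra for $1+(-)$), and for every object $Y$ the free cia for the identity functor $\mathrm{Id}$ on $Y$ (equivalently, the terminal coalgebra for $(-)+Y$) is $TY\cong N\times Y+1$.
   Context: Hyper-extensive category: countable coproducts that are universal (pullbacks along arbitrary morphisms exist and preserve them), disjoint (injections monic, pairwise pullbacks initial), and coherent (a countable family of pairwise disjoint coproduct injections has copairing a coproduct injection). For an endofunctor $G$, an algebra $a\colon GA\to A$ is a cia if every $e\colon X\to GX+A$ admits a unique $s$ with $s=[a,\mathrm{id}_A]\cdot(Gs+\mathrm{id}_A)\cdot e$; a free cia on $Y$ is a cia with a morphism from $Y$ through which every morphism from $Y$ into a cia factors uniquely via an algebra morphism. *)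

From Stdlib Require Import Arith.

Set Implicit Arguments.

Record Category := {
  Ob :> Type;
  Hom : Ob -> Ob -> Type;
  idm : forall A : Ob, Hom A A;
  comp : forall (A B D : Ob), Hom B D -> Hom A B -> Hom A D;
  comp_assoc : forall (A B D E : Ob) (h : Hom D E) (g : Hom B D) (f : Hom A B),
      comp h (comp g f) = comp (comp h g) f;
  comp_id_l : forall (A B : Ob) (f : Hom A B), comp (idm B) f = f;
  comp_id_r : forall (A B : Ob) (f : Hom A B), comp f (idm A) = f
}.

Arguments Hom {c} _ _.
Arguments idm {c} _.
Arguments comp {c A B D} _ _.

Notation "g \o' f" := (comp g f) (at level 40, left associativity).

Section Basic.
Variable C : Category.

Definition is_initial (Z : C) : Prop :=
  forall X : C, exists! h : Hom Z X, True.

Definition is_terminal (T : C) : Prop :=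
  forall X : C, exists! h : Hom X T, True.

Definition monic {A B : C} (m : Hom A B) : Prop :=
  forall (X : C) (u v : Hom X A), m \o' u = m \o' v -> u = v.

Definition is_iso {A B : C} (f : Hom A B) : Prop :=
  exists g : Hom B A, g \o' f = idm A /\ f \o' g = idm B.

Definition isomorphic (A B : C) : Prop := exists f : Hom A B, is_iso f.

Definition is_coproduct {I : Type} (A : I -> C) (S : C)
    (inj : forall i, Hom (A i) S) : Prop :=
  forall (X : C) (f : forall i, Hom (A i) X),
    exists! h : Hom S X, forall i, h \o' inj i = f i.

Definition is_bincoproduct {A B S : C} (l : Hom A S) (r : Hom B S) : Prop :=
  forall (X : C) (f : Hom A X) (g : Hom B X),
    exists! h : Hom S X, h \o' l = f /\ h \o' r = g.

Definition is_binproduct {A B P : C} (p1 : Hom P A) (p2 : Hom P B) : Prop :=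
  forall (X : C) (f : Hom X A) (g : Hom X B),
    exists! h : Hom X P, p1 \o' h = f /\ p2 \o' h = g.

Definition has_binary_products : Prop :=
  forall A B : C, exists (P : C) (p1 : Hom P A) (p2 : Hom P B),
    is_binproduct p1 p2.

Definition is_pullback {A B D P : C} (f : Hom A D) (g : Hom B D)
    (p : Hom P A) (q : Hom P B) : Prop :=
  f \o' p = g \o' q /\
  forall (X : C) (u : Hom X A) (v : Hom X B), f \o' u = g \o' v ->
    exists! h : Hom X P, p \o' h = u /\ q \o' h = v.

Definition is_coproduct_injection {X Z : C} (m : Hom X Z) : Prop :=
  exists (Y : C) (m' : Hom Y Z), is_bincoproduct m m'.

Definition countable_type (I : Type) : Prop :=
  exists enc : I -> nat, forall i j, enc i = enc j -> i = j.

Definition has_countable_coproducts : Prop :=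
  forall (I : Type), countable_type I -> forall A : I -> C,
    exists (S : C) (inj : forall i, Hom (A i) S), is_coproduct A S inj.

Definition coproducts_universal : Prop :=
  forall (I : Type), countable_type I -> forall (A : I -> C) (S : C)
    (inj : forall i, Hom (A i) S), is_coproduct A S inj ->
    forall (B : C) (f : Hom B S),
      (forall i, exists (P : C) (p : Hom P (A i)) (q : Hom P B),
          is_pullback (inj i) f p q) /\
      (forall (P : I -> C) (p : forall i, Hom (P i) (A i))
              (q : forall i, Hom (P i) B),
          (forall i, is_pullback (inj i) f (p i) (q i)) ->
          is_coproduct P B q).

Definition coproducts_disjoint : Prop :=
  forall (I : Type), countable_type I -> forall (A : I -> C) (S : C)
    (inj : forall i, Hom (A i) S), is_coproduct A S inj ->
    (forall i, monic (inj i)) /\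
    (forall i j, i <> j -> forall (P : C) (p : Hom P (A i)) (q : Hom P (A j)),
        is_pullback (inj i) (inj j) p q -> is_initial P).

Definition coproducts_coherent : Prop :=
  forall (I : Type), countable_type I -> forall (X : I -> C) (Z : C)
    (m : forall i, Hom (X i) Z),
    (forall i, is_coproduct_injection (m i)) ->
    (forall i j, i <> j -> exists (P : C) (p : Hom P (X i)) (q : Hom P (X j)),
        is_pullback (m i) (m j) p q /\ is_initial P) ->
    forall (S : C) (s : forall i, Hom (X i) S), is_coproduct X S s ->
    forall h : Hom S Z, (forall i, h \o' s i = m i) ->
    is_coproduct_injection h.

Definition hyper_extensive : Prop :=
  has_countable_coproducts /\ coproducts_universal /\
  coproducts_disjoint /\ coproducts_coherent.

(** Natural numbers object (Lawvere), i.e. initial algebra for [1 + (-)]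
    presented by zero [z : 1 -> N] and successor [s : N -> N]. *)
Definition is_NNO (one N : C) (z : Hom one N) (s : Hom N N) : Prop :=
  forall (X : C) (x : Hom one X) (f : Hom X X),
    exists! h : Hom N X, h \o' z = x /\ h \o' s = f \o' h.

(** For [e : X -> X + A], [s] solves [e] iff
    [s = [a, id_A] . (s + id_A) . e = [a . s, id_A] . e]; the copairing is
    expressed through the universal property of the chosen coproduct. *)
Definition solves {A X Q : C} (a : Hom A A) (l : Hom X Q) (r : Hom A Q)
    (e : Hom X Q) (s : Hom X A) : Prop :=
  forall c : Hom Q A, c \o' l = a \o' s -> c \o' r = idm A -> s = c \o' e.

Definition is_cia_Id {A : C} (a : Hom A A) : Prop :=
  forall (X Q : C) (l : Hom X Q) (r : Hom A Q), is_bincoproduct l r ->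
    forall e : Hom X Q, exists! s : Hom X A, solves a l r e s.

Definition is_free_cia_Id {Y T : C} (a : Hom T T) (eta : Hom Y T) : Prop :=
  is_cia_Id a /\
  forall (B : C) (b : Hom B B), is_cia_Id b -> forall f : Hom Y B,
    exists! h : Hom T B, h \o' a = b \o' h /\ h \o' eta = f.

End Basic.

Arguments is_initial {C} _.
Arguments is_terminal {C} _.
Arguments monic {C A B} _.
Arguments is_iso {C A B} _.
Arguments isomorphic {C} _ _.
Arguments is_coproduct {C I} _ _ _.
Arguments is_bincoproduct {C A B S} _ _.
Arguments is_binproduct {C A B P} _ _.
Arguments is_pullback {C A B D P} _ _ _ _.
Arguments is_coproduct_injection {C X Z} _.
Arguments is_NNO {C one N} _ _.
Arguments solves {C A X Q} _ _ _ _ _.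
Arguments is_cia_Id {C A} _.
Arguments is_free_cia_Id {C Y T} _ _.

(* A map out of N = ∐_n 1 is a sequence of points, and the recursion equations force the
   n-th point to be f^n x; so N is a natural numbers object.  The free cia on Y is
   T = ∐_n Y + 1 (indexed by [option nat]) with the algebra a shifting the n-th copy of Y to
   the (n+1)-st and fixing the point; by universality N × Y ≅ ∐_n Y, hence T ≅ N × Y + 1.
   To solve e : X → X + T, pull back along e to cut out the parts D_k of X reaching T after
   exactly k steps, at t_k : D_k → T.  They are pairwise disjoint, so by coherence
   X = ∐_k D_k + R, and e maps R into X through R.  A solution must be a^k ∘ t_k on D_k; on R
   it satisfies g = a ∘ g ∘ s, which forces it onto the point, since the n-th copy of Y misses
   the image of a^(n+1). *)

From Stdlib Require Import ClassicalEpsilon Arith Lia.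

Arguments comp_assoc {c A B D E} h g f.
Arguments comp_id_l {c A B} f.
Arguments comp_id_r {c A B} f.

Ltac assoc_r := repeat rewrite <- comp_assoc.

Section UniversalProperties.
Context {C : Category}.

Lemma coproduct_hom_ext {I : Type} {A : I -> C} {S X : C} {inj : forall i, Hom (A i) S}
  (HS : is_coproduct A S inj) (h1 h2 : Hom S X) :
  (forall i, h1 \o' inj i = h2 \o' inj i) -> h1 = h2.
Proof.
  intros E. destruct (HS X (fun i => h2 \o' inj i)) as [h [_ U]].
  rewrite <- (U h1 E), <- (U h2 (fun i => eq_refl)). reflexivity.
Qed.

Lemma bincoproduct_hom_ext {A B S X : C} {l : Hom A S} {r : Hom B S}
  (Hlr : is_bincoproduct l r) (h1 h2 : Hom S X) :
  h1 \o' l = h2 \o' l -> h1 \o' r = h2 \o' r -> h1 = h2.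
Proof.
  intros El Er. destruct (Hlr X (h2 \o' l) (h2 \o' r)) as [h [_ U]].
  rewrite <- (U h1 (conj El Er)), <- (U h2 (conj eq_refl eq_refl)). reflexivity.
Qed.

Lemma binproduct_hom_ext {A B P X : C} {p1 : Hom P A} {p2 : Hom P B}
  (Hp : is_binproduct p1 p2) (h1 h2 : Hom X P) :
  p1 \o' h1 = p1 \o' h2 -> p2 \o' h1 = p2 \o' h2 -> h1 = h2.
Proof.
  intros E1 E2. destruct (Hp X (p1 \o' h2) (p2 \o' h2)) as [h [_ U]].
  rewrite <- (U h1 (conj E1 E2)), <- (U h2 (conj eq_refl eq_refl)). reflexivity.
Qed.

Lemma initial_hom_unique {Z X : C} (HZ : is_initial Z) (f g : Hom Z X) : f = g.
Proof.
  destruct (HZ X) as [h [_ U]]. rewrite <- (U f I), <- (U g I). reflexivity.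
Qed.

Lemma terminal_hom_unique {Z X : C} (HZ : is_terminal Z) (f g : Hom X Z) : f = g.
Proof.
  destruct (HZ X) as [h [_ U]]. rewrite <- (U f I), <- (U g I). reflexivity.
Qed.

Lemma coproduct_of_initials {I : Type} {A : I -> C} {S : C} {inj : forall i, Hom (A i) S}
  (HS : is_coproduct A S inj) : (forall i, is_initial (A i)) -> is_initial S.
Proof.
  intros HA X.
  destruct (HS X (fun i => proj1_sig (constructive_indefinite_description _ (HA i X))))
    as [h [_ U]].
  exists h. split; [trivial|]. intros h' _. apply U. intros i. apply initial_hom_unique, HA.
Qed.

Lemma coproducts_isomorphic {I : Type} {A : I -> C} {S S' : C}
  {s : forall i, Hom (A i) S} {s' : forall i, Hom (A i) S'} :
  is_coproduct A S s -> is_coproduct A S' s' -> isomorphic S S'.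
Proof.
  intros HS HS'.
  destruct (HS S' s') as [f [Hf _]], (HS' S s) as [g [Hg _]].
  exists f, g. split.
  - apply (coproduct_hom_ext HS). intros i. rewrite <- comp_assoc, Hf, Hg, comp_id_l. reflexivity.
  - apply (coproduct_hom_ext HS'). intros i. rewrite <- comp_assoc, Hg, Hf, comp_id_l. reflexivity.
Qed.

Lemma bincoproduct_sym {A B S : C} {l : Hom A S} {r : Hom B S} :
  is_bincoproduct l r -> is_bincoproduct r l.
Proof.
  intros Hlr X f g. destruct (Hlr X g f) as [h [[E1 E2] U]].
  exists h. split; [auto|]. intros h' [F1 F2]. apply U; auto.
Qed.

Lemma bincoproduct_inl_injection {A B S : C} {l : Hom A S} {r : Hom B S} :
  is_bincoproduct l r -> is_coproduct_injection l.
Proof. intros Hlr. exists B, r. exact Hlr. Qed.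

Lemma bincoproduct_inr_injection {A B S : C} {l : Hom A S} {r : Hom B S} :
  is_bincoproduct l r -> is_coproduct_injection r.
Proof. intros Hlr. exists A, l. exact (bincoproduct_sym Hlr). Qed.

Definition bool_family (A B : C) (b : bool) : C := if b then A else B.

Definition bool_injections {A B S : C} (l : Hom A S) (r : Hom B S) :
  forall b, Hom (bool_family A B b) S :=
  fun b => match b return Hom (bool_family A B b) S with true => l | false => r end.

Lemma bincoproduct_coproduct {A B S : C} {l : Hom A S} {r : Hom B S} :
  is_bincoproduct l r -> is_coproduct (bool_family A B) S (bool_injections l r).
Proof.
  intros Hlr X f. destruct (Hlr X (f true) (f false)) as [h [[E1 E2] U]].
  exists h. split.
  - intros [|]; assumption.
  - intros h' E. apply U. split; [apply (E true) | apply (E false)].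
Qed.

Lemma coproduct_bincoproduct {A : bool -> C} {S : C} {k : forall b, Hom (A b) S} :
  is_coproduct A S k -> is_bincoproduct (k true) (k false).
Proof.
  intros HS X f g.
  destruct (HS X (fun b => match b return Hom (A b) X with true => f | false => g end))
    as [h [Hh U]].
  exists h. split.
  - split; [apply (Hh true) | apply (Hh false)].
  - intros h' [E1 E2]. apply U. intros [|]; assumption.
Qed.

Definition option_family {I : Type} (A : I -> C) (B : C) (o : option I) : C :=
  match o with Some i => A i | None => B end.

Definition option_injections {I : Type} {A : I -> C} {B P S : C}
  (q : forall i, Hom (A i) P) (l : Hom P S) (r : Hom B S) :
  forall o, Hom (option_family A B o) S :=
  fun o => match o return Hom (option_family A B o) S with
           | Some i => l \o' q i
           | None => r
           end.

Lemma option_coproduct {I : Type} {A : I -> C} {B P S : C} {q : forall i, Hom (A i) P}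
  {l : Hom P S} {r : Hom B S} :
  is_coproduct A P q -> is_bincoproduct l r ->
  is_coproduct (option_family A B) S (option_injections q l r).
Proof.
  intros HP Hlr X f.
  destruct (HP X (fun i => f (Some i))) as [g [Hg _]].
  destruct (Hlr X g (f None)) as [h [[Hl Hr] _]].
  exists h. split.
  - intros [i|]; cbn; [rewrite comp_assoc, Hl; apply Hg | exact Hr].
  - intros h' E. apply (bincoproduct_hom_ext Hlr); [|rewrite Hr; symmetry; exact (E None)].
    apply (coproduct_hom_ext HP). intros i.
    rewrite Hl, Hg, <- comp_assoc. symmetry. exact (E (Some i)).
Qed.

Lemma option_shift_exists {A B T : C}
  {iota : forall o, Hom (option_family (fun _ : nat => A) B o) T} :
  is_coproduct (option_family (fun _ : nat => A) B) T iota ->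
  exists a : Hom T T,
    (forall n, a \o' iota (Some n) = iota (Some (S n))) /\ a \o' iota None = iota None.
Proof.
  intros HT.
  destruct (HT T (fun o => match o return Hom (option_family (fun _ => A) B o) T with
                           | Some n => iota (Some (S n))
                           | None => iota None
                           end)) as [a [Ha _]].
  exists a. split; [intros n; exact (Ha (Some n)) | exact (Ha None)].
Qed.

End UniversalProperties.

Lemma countable_bool : countable_type bool.
Proof. exists (fun b : bool => if b then 0 else 1). intros [|] [|]; cbn; congruence. Qed.

Lemma countable_nat : countable_type nat.
Proof. exists (fun n => n). auto. Qed.

Lemma countable_empty : countable_type Empty_set.
Proof. exists (fun e : Empty_set => match e with end). intros []. Qed.

Lemma countable_option {I : Type} : countable_type I -> countable_type (option I).
Proof.
  intros [enc Henc].
  exists (fun o => match o with Some i => S (enc i) | None => 0 end).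
  intros [i|] [j|]; cbn; try congruence.
  intros E. f_equal. apply Henc. congruence.
Qed.

Section Iteration.
Context {C : Category}.

Definition endo_iter {A : C} (f : Hom A A) (k : nat) : Hom A A :=
  Nat.iter k (fun g => f \o' g) (idm A).

Lemma endo_iter_S {A : C} (f : Hom A A) k : endo_iter f (S k) = f \o' endo_iter f k.
Proof. reflexivity. Qed.

Lemma endo_iter_S_r {A : C} (f : Hom A A) k : endo_iter f (S k) = endo_iter f k \o' f.
Proof.
  induction k as [|k IH].
  - cbn. rewrite comp_id_l, comp_id_r. reflexivity.
  - rewrite (endo_iter_S f (S k)), IH at 1. rewrite comp_assoc. reflexivity.
Qed.

Lemma endo_iter_semiconj {A B : C} (h : Hom A B) (g : Hom A A) (f : Hom B B) :
  h \o' g = f \o' h -> forall k, h \o' endo_iter g k = endo_iter f k \o' h.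
Proof.
  intros E k. induction k as [|k IH].
  - cbn. rewrite comp_id_l, comp_id_r. reflexivity.
  - rewrite !endo_iter_S, comp_assoc, E, <- comp_assoc, IH, comp_assoc. reflexivity.
Qed.

Lemma endo_iter_shift {A Z : C} (j : nat -> Hom A Z) (sh : Hom Z Z) :
  (forall n, sh \o' j n = j (S n)) -> forall k n, endo_iter sh k \o' j n = j (k + n).
Proof.
  intros Hsh k n. induction k as [|k IH].
  - apply comp_id_l.
  - rewrite endo_iter_S, <- comp_assoc, IH. apply Hsh.
Qed.

Lemma shift_semiconj {A Z X : C} {j : nat -> Hom A Z} {sh : Hom Z Z}
  (Hsh : forall n, sh \o' j n = j (S n)) (h : Hom Z X) (f : Hom X X) :
  h \o' sh = f \o' h -> forall n, h \o' j n = endo_iter f n \o' (h \o' j 0).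
Proof.
  intros Hh n.
  rewrite <- (Nat.add_0_r n) at 1.
  rewrite <- (endo_iter_shift j sh Hsh n 0), comp_assoc, (endo_iter_semiconj h sh f Hh).
  apply eq_sym, comp_assoc.
Qed.

Lemma shift_iterate_semiconj {A Z X : C} {j : nat -> Hom A Z} {sh : Hom Z Z}
  (Hsh : forall n, sh \o' j n = j (S n)) (h : Hom Z X) (f : Hom X X) (x : Hom A X) :
  (forall n, h \o' j n = endo_iter f n \o' x) ->
  forall n, (h \o' sh) \o' j n = (f \o' h) \o' j n.
Proof.
  intros Hh n.
  rewrite <- !comp_assoc, Hsh, !Hh, endo_iter_S, comp_assoc. reflexivity.
Qed.

Lemma self_similar_iterate {A B : C} (g : Hom A B) (s : Hom A A) (a : Hom B B) :
  g = a \o' (g \o' s) -> forall k, g = endo_iter a k \o' (g \o' endo_iter s k).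
Proof.
  intros E k. induction k as [|k IH].
  - cbn. rewrite comp_id_l, comp_id_r. reflexivity.
  - rewrite E at 1. rewrite IH at 1.
    rewrite endo_iter_S, endo_iter_S_r. assoc_r. reflexivity.
Qed.

End Iteration.

Section HyperExtensive.
Context {C : Category} (HC : hyper_extensive C).

Lemma bincoproduct_exists (A B : C) :
  exists (S : C) (l : Hom A S) (r : Hom B S), is_bincoproduct l r.
Proof.
  destruct HC as [Hcc _].
  destruct (Hcc bool countable_bool (bool_family A B)) as [S [k Hk]].
  exists S, (k true), (k false). exact (coproduct_bincoproduct Hk).
Qed.

(* Pull back the presentation of Z as the empty coproduct along f. *)
Lemma initial_strict {Z P : C} (HZ : is_initial Z) (f : Hom P Z) : is_initial P.
Proof.
  destruct HC as [_ [Huniv _]].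
  pose (A := fun e : Empty_set => match e return C with end).
  pose (k := fun e : Empty_set => match e return Hom (A e) Z with end).
  assert (Hk : is_coproduct A Z k).
  { intros X g. destruct (HZ X) as [h [_ U]]. exists h. split.
    - intros [].
    - intros h' _. apply U; trivial. }
  destruct (Huniv Empty_set countable_empty A Z k Hk P f) as [_ Hpieces].
  assert (HP := Hpieces A (fun e => match e with end) (fun e => match e with end)
                  (fun e => match e with end)).
  intros X. destruct (HP X (fun e => match e with end)) as [h [_ U]].
  exists h. split; [trivial|]. intros h' _. apply U. intros [].
Qed.

Lemma coproduct_pullbacks {I : Type} (cI : countable_type I) {A : I -> C} {S B : C}
  {inj : forall i, Hom (A i) S} (HS : is_coproduct A S inj) (f : Hom B S) :
  exists (P : I -> C) (p : forall i, Hom (P i) (A i)) (q : forall i, Hom (P i) B),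
    (forall i, is_pullback (inj i) f (p i) (q i)) /\ is_coproduct P B q.
Proof.
  destruct HC as [_ [Huniv _]].
  destruct (Huniv I cI A S inj HS B f) as [Hex Hpieces].
  assert (Hex' : forall i, exists w : {P : C & (Hom P (A i) * Hom P B)%type},
             is_pullback (inj i) f (fst (projT2 w)) (snd (projT2 w))).
  { intros i. destruct (Hex i) as [P [p [q Hpb]]]. exists (existT _ P (p, q)). exact Hpb. }
  pose (w i := proj1_sig (constructive_indefinite_description _ (Hex' i))).
  assert (Hpb : forall i, is_pullback (inj i) f (fst (projT2 (w i))) (snd (projT2 (w i))))
    by (intros i; exact (proj2_sig (constructive_indefinite_description _ (Hex' i)))).
  exists (fun i => projT1 (w i)), (fun i => fst (projT2 (w i))), (fun i => snd (projT2 (w i))).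
  split; [exact Hpb | exact (Hpieces _ _ _ Hpb)].
Qed.

Lemma bincoproduct_pullbacks {A1 A2 S B : C} {l : Hom A1 S} {r : Hom A2 S}
  (Hlr : is_bincoproduct l r) (f : Hom B S) :
  exists (P1 P2 : C) (p1 : Hom P1 A1) (p2 : Hom P2 A2) (q1 : Hom P1 B) (q2 : Hom P2 B),
    is_pullback l f p1 q1 /\ is_pullback r f p2 q2 /\ is_bincoproduct q1 q2.
Proof.
  destruct (coproduct_pullbacks countable_bool (bincoproduct_coproduct Hlr) f)
    as [P [p [q [Hpb HB]]]].
  exists (P true), (P false), (p true), (p false), (q true), (q false).
  split; [exact (Hpb true)|]. split; [exact (Hpb false)|].
  exact (coproduct_bincoproduct HB).
Qed.

Lemma coproduct_injections_disjoint {I : Type} (cI : countable_type I) {A : I -> C} {S : C}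
  {inj : forall i, Hom (A i) S} (HS : is_coproduct A S inj) (i j : I) :
  i <> j -> forall (Z : C) (u : Hom Z (A i)) (v : Hom Z (A j)),
  inj i \o' u = inj j \o' v -> is_initial Z.
Proof.
  intros Hij Z u v E. assert (HC' := HC). destruct HC' as [_ [Huniv [Hdisj _]]].
  destruct (proj1 (Huniv I cI A S inj HS (A j) (inj j)) i) as [P [p [q Hpb]]].
  assert (HP := proj2 (Hdisj I cI A S inj HS) i j Hij P p q Hpb).
  destruct (proj2 Hpb Z u v E) as [h _].
  exact (initial_strict HP h).
Qed.

Lemma bincoproduct_disjoint {A B S : C} {l : Hom A S} {r : Hom B S}
  (Hlr : is_bincoproduct l r) (Z : C) (u : Hom Z A) (v : Hom Z B) :
  l \o' u = r \o' v -> is_initial Z.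
Proof.
  exact (coproduct_injections_disjoint countable_bool (bincoproduct_coproduct Hlr)
           true false ltac:(discriminate) Z u v).
Qed.

Lemma bincoproduct_inl_monic {A B S : C} {l : Hom A S} {r : Hom B S} :
  is_bincoproduct l r -> monic l.
Proof.
  intros Hlr. destruct HC as [_ [_ [Hdisj _]]].
  exact (proj1 (Hdisj bool countable_bool _ _ _ (bincoproduct_coproduct Hlr)) true).
Qed.

Lemma initial_of_pieces {I : Type} (cI : countable_type I) {A : I -> C} {S Z : C}
  {inj : forall i, Hom (A i) S} (HS : is_coproduct A S inj) (f : Hom Z S) :
  (forall i (W : C) (u : Hom W Z) (w : Hom W (A i)), f \o' u = inj i \o' w -> is_initial W) ->
  is_initial Z.
Proof.
  intros Hpieces.
  destruct (coproduct_pullbacks cI HS f) as [P [p [q [Hpb HZ]]]].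
  apply (coproduct_of_initials HZ). intros i.
  apply (Hpieces i _ (q i) (p i)). symmetry. apply (Hpb i).
Qed.

Lemma factor_through_inl {A B S Z : C} {l : Hom A S} {r : Hom B S}
  (Hlr : is_bincoproduct l r) (f : Hom Z S) :
  (forall (W : C) (u : Hom W Z) (v : Hom W B), f \o' u = r \o' v -> is_initial W) ->
  exists g : Hom Z A, f = l \o' g.
Proof.
  intros Hr.
  destruct (bincoproduct_pullbacks Hlr f)
    as [P1 [P2 [p1 [p2 [q1 [q2 [[E1 _] [[E2 _] HZ]]]]]]]].
  assert (HP2 : is_initial P2) by (apply (Hr _ q2 p2); symmetry; exact E2).
  destruct (HP2 A) as [w _].
  destruct (HZ A p1 w) as [g [[G1 G2] _]].
  exists g. apply (bincoproduct_hom_ext HZ).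
  - rewrite <- comp_assoc, G1. symmetry. exact E1.
  - apply (initial_hom_unique HP2).
Qed.

Lemma pullback_of_injection {X Z B : C} {m : Hom X Z} (Hm : is_coproduct_injection m)
  (f : Hom B Z) :
  exists (P : C) (p : Hom P X) (q : Hom P B),
    is_pullback m f p q /\ is_coproduct_injection q.
Proof.
  destruct Hm as [Y [m' Hm]].
  destruct (bincoproduct_pullbacks Hm f) as [P1 [P2 [p1 [p2 [q1 [q2 [H1 [_ H3]]]]]]]].
  exists P1, p1, q1. split; [exact H1|]. exists P2, q2. exact H3.
Qed.

(* If X = D + D' and Q = X + T' then Q = D + (D' + T'). *)
Lemma coproduct_injection_comp {D X Q : C} {d : Hom D X} {l : Hom X Q} :
  is_coproduct_injection d -> is_coproduct_injection l -> is_coproduct_injection (l \o' d).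
Proof.
  intros [D' [d' Hd]] [T' [r Hl]].
  destruct (bincoproduct_exists D' T') as [W [u [v Hw]]].
  destruct (Hw Q (l \o' d') r) as [k [[Hk1 Hk2] _]].
  exists W, k. intros Z f g.
  destruct (Hd Z f (g \o' u)) as [h1 [[E1 E2] _]].
  destruct (Hl Z h1 (g \o' v)) as [h [[E3 E4] _]].
  exists h. split; [split|].
  - rewrite comp_assoc, E3, E1. reflexivity.
  - apply (bincoproduct_hom_ext Hw).
    + rewrite <- comp_assoc, Hk1, comp_assoc, E3, E2. reflexivity.
    + rewrite <- comp_assoc, Hk2, E4. reflexivity.
  - intros h' [F1 F2]. symmetry. apply (bincoproduct_hom_ext Hl).
    + apply (bincoproduct_hom_ext Hd).
      * rewrite <- !comp_assoc, F1, comp_assoc, E3, E1. reflexivity.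
      * rewrite <- !comp_assoc, <- Hk1, (comp_assoc h' k u), F2, Hk1, comp_assoc, E3, E2.
        reflexivity.
    + rewrite <- Hk2, (comp_assoc h' k v), F2, Hk2, E4. reflexivity.
Qed.

End HyperExtensive.

Section Products.
Context {C : Category}.

Lemma product_pullback_point {one N Y P : C} (Hone : is_terminal one) (x : Hom one N)
  {p1 : Hom P N} {p2 : Hom P Y} (Hp : is_binproduct p1 p2) (bY : Hom Y one) (q : Hom Y P) :
  p1 \o' q = x \o' bY -> p2 \o' q = idm Y -> is_pullback x p1 bY q.
Proof.
  intros Hq1 Hq2. split; [symmetry; exact Hq1|].
  intros Z u v E. exists (p2 \o' v). split; [split|].
  - apply (terminal_hom_unique Hone).
  - apply (binproduct_hom_ext Hp).
    + rewrite comp_assoc, Hq1, <- comp_assoc.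
      rewrite (terminal_hom_unique Hone (bY \o' (p2 \o' v)) u). exact E.
    + rewrite comp_assoc, Hq2. apply comp_id_l.
  - intros h' [_ F2]. rewrite <- F2, comp_assoc, Hq2. apply comp_id_l.
Qed.

Lemma product_with_copower (HC : hyper_extensive C) {one N Y P : C} (Hone : is_terminal one)
  {inj : nat -> Hom one N} (HN : is_coproduct (fun _ : nat => one) N inj)
  {p1 : Hom P N} {p2 : Hom P Y} (Hp : is_binproduct p1 p2) :
  exists q : nat -> Hom Y P, is_coproduct (fun _ : nat => Y) P q.
Proof.
  destruct (Hone Y) as [bY _].
  pose (q n := proj1_sig (constructive_indefinite_description _ (Hp Y (inj n \o' bY) (idm Y)))).
  assert (Hq : forall n, p1 \o' q n = inj n \o' bY /\ p2 \o' q n = idm Y)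
    by (intros n; exact (proj1 (proj2_sig (constructive_indefinite_description _
                                             (Hp Y (inj n \o' bY) (idm Y)))))).
  exists q. destruct HC as [_ [Huniv _]].
  apply (proj2 (Huniv nat countable_nat _ N inj HN P p1) _ (fun _ => bY)).
  intros n. exact (product_pullback_point Hone (inj n) Hp bY (q n) (proj1 (Hq n)) (proj2 (Hq n))).
Qed.

End Products.

Section NaturalNumbers.
Context {C : Category}.

Lemma coproduct_shift_NNO {one N : C} {inj : nat -> Hom one N}
  (HN : is_coproduct (fun _ : nat => one) N inj) {succ : Hom N N}
  (Hsucc : forall n, succ \o' inj n = inj (S n)) : is_NNO (inj 0) succ.
Proof.
  intros X x f.
  destruct (HN X (fun n => endo_iter f n \o' x)) as [h [Hh _]].
  exists h. split; [split|].
  - rewrite Hh. apply comp_id_l.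
  - apply (coproduct_hom_ext HN). exact (shift_iterate_semiconj Hsucc h f x Hh).
  - intros h' [H0 Hs]. apply (coproduct_hom_ext HN). intros n.
    rewrite Hh, (shift_semiconj Hsucc h' f Hs n), H0. reflexivity.
Qed.

End NaturalNumbers.

Section FixedPoints.
Context {C : Category}.

Lemma solves_inl_iff {A Z Q : C} (b : Hom A A) {l : Hom Z Q} {r : Hom A Q}
  (Hlr : is_bincoproduct l r) (x : Hom Z A) : solves b l r l x <-> b \o' x = x.
Proof.
  split.
  - intros Hx. destruct (Hlr A (b \o' x) (idm A)) as [c [[Hcl Hcr] _]].
    rewrite <- Hcl. symmetry. exact (Hx c Hcl Hcr).
  - intros Hx c Hcl _. rewrite Hcl. symmetry. exact Hx.
Qed.

Lemma cia_unique_fixed_point {A Z Q : C} {b : Hom A A} (Hb : is_cia_Id b)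
  {l : Hom Z Q} {r : Hom A Q} (Hlr : is_bincoproduct l r) :
  exists! x : Hom Z A, b \o' x = x.
Proof.
  destruct (Hb Z Q l r Hlr l) as [x [Hx U]].
  exists x. split.
  - exact (proj1 (solves_inl_iff b Hlr x) Hx).
  - intros x' Hx'. apply U, (solves_inl_iff b Hlr). exact Hx'.
Qed.

End FixedPoints.

Section InjectionPullbacks.
Context {C : Category} (HC : hyper_extensive C).

Record injection_pullback {A B Z : C} (m : Hom A Z) (f : Hom B Z) := {
  ipb_obj : C;
  ipb_fst : Hom ipb_obj A;
  ipb_snd : Hom ipb_obj B;
  ipb_square : is_pullback m f ipb_fst ipb_snd;
  ipb_snd_injection : is_coproduct_injection ipb_snd }.

Lemma injection_pullback_inhabited {A B Z : C} {m : Hom A Z}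
  (Hm : is_coproduct_injection m) (f : Hom B Z) : exists _ : injection_pullback m f, True.
Proof.
  destruct (pullback_of_injection HC Hm f) as [P [p [q [Hpb Hq]]]].
  exists {| ipb_obj := P; ipb_fst := p; ipb_snd := q; ipb_square := Hpb;
            ipb_snd_injection := Hq |}.
  trivial.
Qed.

Definition choose_injection_pullback {A B Z : C} {m : Hom A Z}
  (Hm : is_coproduct_injection m) (f : Hom B Z) : injection_pullback m f :=
  proj1_sig (constructive_indefinite_description _ (injection_pullback_inhabited Hm f)).

End InjectionPullbacks.

Arguments ipb_obj {C A B Z m f}.
Arguments ipb_fst {C A B Z m f}.
Arguments ipb_snd {C A B Z m f}.
Arguments ipb_square {C A B Z m f}.
Arguments ipb_snd_injection {C A B Z m f}.

Section ChainOfPullbacks.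
Context {C : Category} (HC : hyper_extensive C).
Context {X Q T : C} {l : Hom X Q} {r : Hom T Q} (Hlr : is_bincoproduct l r) (e : Hom X Q).

Record chain_piece := {
  piece_obj : C;
  piece_incl : Hom piece_obj X;
  piece_map : Hom piece_obj T;
  piece_incl_injection : is_coproduct_injection piece_incl }.

Definition next_pullback (D : chain_piece) : injection_pullback (l \o' piece_incl D) e :=
  choose_injection_pullback HC
    (coproduct_injection_comp HC (piece_incl_injection D) (bincoproduct_inl_injection Hlr)) e.

(* [chain k] is the part of X whose points reach T after exactly k steps of e;
   [piece_map] records the point of T reached. *)
Fixpoint chain (k : nat) : chain_piece :=
  match k with
  | 0 =>
      let P := choose_injection_pullback HC (bincoproduct_inr_injection Hlr) e in
      {| piece_obj := ipb_obj P; piece_incl := ipb_snd P; piece_map := ipb_fst P;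
         piece_incl_injection := ipb_snd_injection P |}
  | S k =>
      let P := next_pullback (chain k) in
      {| piece_obj := ipb_obj P; piece_incl := ipb_snd P;
         piece_map := piece_map (chain k) \o' ipb_fst P;
         piece_incl_injection := ipb_snd_injection P |}
  end.

Definition chain_obj k := piece_obj (chain k).
Definition chain_incl k : Hom (chain_obj k) X := piece_incl (chain k).
Definition chain_map k : Hom (chain_obj k) T := piece_map (chain k).
Definition chain_shift k : Hom (chain_obj (S k)) (chain_obj k) :=
  ipb_fst (next_pullback (chain k)).

Lemma chain_zero_pullback : is_pullback r e (chain_map 0) (chain_incl 0).
Proof. apply ipb_square. Qed.

Lemma chain_succ_pullback k :
  is_pullback (l \o' chain_incl k) e (chain_shift k) (chain_incl (S k)).
Proof. apply ipb_square. Qed.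

Lemma chain_map_succ k : chain_map (S k) = chain_map k \o' chain_shift k.
Proof. reflexivity. Qed.

Lemma chain_zero_succ_disjoint k {Z : C} (u : Hom Z (chain_obj 0))
  (v : Hom Z (chain_obj (S k))) :
  chain_incl 0 \o' u = chain_incl (S k) \o' v -> is_initial Z.
Proof.
  intros E.
  apply (bincoproduct_disjoint HC Hlr Z (chain_incl k \o' (chain_shift k \o' v))
           (chain_map 0 \o' u)).
  rewrite !comp_assoc, (proj1 (chain_succ_pullback k)), (proj1 chain_zero_pullback).
  assoc_r. rewrite E. reflexivity.
Qed.

Lemma chain_disjoint j k : j <> k ->
  forall (Z : C) (u : Hom Z (chain_obj j)) (v : Hom Z (chain_obj k)),
  chain_incl j \o' u = chain_incl k \o' v -> is_initial Z.
Proof.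
  revert k. induction j as [|j IH]; intros [|k] Hjk Z u v E.
  - congruence.
  - exact (chain_zero_succ_disjoint k u v E).
  - exact (chain_zero_succ_disjoint j v u (eq_sym E)).
  - apply (IH k ltac:(congruence) Z (chain_shift j \o' u) (chain_shift k \o' v)).
    apply (bincoproduct_inl_monic HC Hlr).
    rewrite !comp_assoc, (proj1 (chain_succ_pullback j)), (proj1 (chain_succ_pullback k)).
    assoc_r. rewrite E. reflexivity.
Qed.

Lemma chain_union_injection :
  exists (U : C) (s : forall k, Hom (chain_obj k) U) (h : Hom U X),
    is_coproduct chain_obj U s /\ (forall k, h \o' s k = chain_incl k) /\
    is_coproduct_injection h.
Proof.
  assert (HC' := HC). destruct HC' as [Hcc [_ [_ Hcoh]]].
  destruct (Hcc nat countable_nat chain_obj) as [U [s Hs]].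
  destruct (Hs X chain_incl) as [h [Hh _]].
  exists U, s, h. split; [exact Hs|]. split; [exact Hh|].
  apply (Hcoh nat countable_nat chain_obj X chain_incl
            (fun k => piece_incl_injection (chain k)) ) with (S := U) (s := s);
    [|exact Hs|exact Hh].
  intros i j Hij.
  destruct (pullback_of_injection HC (piece_incl_injection (chain i)) (chain_incl j))
    as [P [p [q [Hpb _]]]].
  exists P, p, q. split; [exact Hpb|].
  exact (chain_disjoint i j Hij P p q (proj1 Hpb)).
Qed.

Section Complement.
Context {U : C} {s : forall k, Hom (chain_obj k) U} (Hs : is_coproduct chain_obj U s).
Context {h : Hom U X} (Hh : forall k, h \o' s k = chain_incl k).
Context {R : C} {rest : Hom R X} (Hrest : is_bincoproduct h rest).

Lemma chain_rest_disjoint k {Z : C} (u : Hom Z (chain_obj k)) (v : Hom Z R) :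
  chain_incl k \o' u = rest \o' v -> is_initial Z.
Proof.
  intros E. apply (bincoproduct_disjoint HC Hrest Z (s k \o' u) v).
  rewrite comp_assoc, Hh. exact E.
Qed.

(* R meets neither e^-1(T) ⊆ chain 0 nor e^-1(chain k) ⊆ chain (S k). *)
Lemma rest_invariant : exists sg : Hom R R, e \o' rest = l \o' (rest \o' sg).
Proof.
  destruct (factor_through_inl HC Hlr (e \o' rest)) as [g Hg].
  { intros W u v Euv.
    destruct (proj2 chain_zero_pullback W v (rest \o' u)) as [w [[_ Hw] _]].
    - rewrite comp_assoc. symmetry. exact Euv.
    - exact (chain_rest_disjoint 0 w u Hw). }
  destruct (factor_through_inl HC (bincoproduct_sym Hrest) g) as [sg Hsg].
  { intros W u v Euv.
    apply (initial_of_pieces HC countable_nat Hs v). intros k W' u' w Ew.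
    destruct (proj2 (chain_succ_pullback k) W' w (rest \o' (u \o' u'))) as [w' [[_ Hw'] _]].
    - rewrite <- Hh, <- !comp_assoc, <- Ew, (comp_assoc h v u'), <- Euv, comp_assoc, comp_assoc.
      rewrite <- Hg. assoc_r. reflexivity.
    - exact (chain_rest_disjoint (S k) w' (u \o' u') Hw'). }
  exists sg. rewrite Hg, Hsg. reflexivity.
Qed.

End Complement.

Lemma copair_on_chain_zero (a : Hom T T) (c : Hom Q T) : c \o' r = idm T ->
  (c \o' e) \o' chain_incl 0 = endo_iter a 0 \o' chain_map 0.
Proof.
  intros Hcr.
  rewrite <- comp_assoc, <- (proj1 chain_zero_pullback), comp_assoc, Hcr. reflexivity.
Qed.

Lemma copair_on_chain_succ (a : Hom T T) (m : Hom X T) (c : Hom Q T) k :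
  c \o' l = a \o' m -> m \o' chain_incl k = endo_iter a k \o' chain_map k ->
  (c \o' e) \o' chain_incl (S k) = endo_iter a (S k) \o' chain_map (S k).
Proof.
  intros Hcl Hm.
  rewrite <- comp_assoc, <- (proj1 (chain_succ_pullback k)), !comp_assoc, Hcl,
    <- (comp_assoc a m), Hm, chain_map_succ, endo_iter_S.
  assoc_r. reflexivity.
Qed.

Lemma solution_on_chain (a : Hom T T) (sol : Hom X T) : solves a l r e sol ->
  forall k, sol \o' chain_incl k = endo_iter a k \o' chain_map k.
Proof.
  intros Hsol. destruct (Hlr T (a \o' sol) (idm T)) as [c [[Hcl Hcr] _]].
  induction k as [|k IH]; rewrite (Hsol c Hcl Hcr) at 1.
  - exact (copair_on_chain_zero a c Hcr).
  - exact (copair_on_chain_succ a sol c k Hcl IH).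
Qed.

End ChainOfPullbacks.

Section ShiftAlgebra.
Context {C : Category} (HC : hyper_extensive C) {one Y T : C} (Hone : is_terminal one).
Context {iota : forall o, Hom (option_family (fun _ : nat => Y) one o) T}
  (HT : is_coproduct (option_family (fun _ : nat => Y) one) T iota).
Context {a : Hom T T} (Ha_some : forall n, a \o' iota (Some n) = iota (Some (S n)))
  (Ha_none : a \o' iota None = iota None).

Lemma shift_iter_some k n : endo_iter a k \o' iota (Some n) = iota (Some (k + n)).
Proof. exact (endo_iter_shift (fun n => iota (Some n)) a Ha_some k n). Qed.

Lemma shift_iter_none k : endo_iter a k \o' iota None = iota None.
Proof. exact (endo_iter_shift (fun _ => iota None) a (fun _ => Ha_none) k 0). Qed.

Lemma shift_iter_avoids n {Z : C} (u : Hom Z T) (y : Hom Z Y) :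
  endo_iter a (S n) \o' u = iota (Some n) \o' y -> is_initial Z.
Proof.
  intros E.
  apply (initial_of_pieces HC (countable_option countable_nat) HT u).
  intros o W v w Ev.
  assert (Ew : iota (Some n) \o' (y \o' v) = endo_iter a (S n) \o' (iota o \o' w))
    by (rewrite <- Ev, !comp_assoc, E; reflexivity).
  destruct o as [k|].
  - rewrite (comp_assoc (endo_iter a (S n))), shift_iter_some in Ew.
    exact (coproduct_injections_disjoint HC (countable_option countable_nat) HT
             (Some n) (Some (S n + k)) ltac:(intros H; injection H; lia) W _ _ Ew).
  - rewrite (comp_assoc (endo_iter a (S n))), shift_iter_none in Ew.
    exact (coproduct_injections_disjoint HC (countable_option countable_nat) HT
             (Some n) None ltac:(discriminate) W _ _ Ew).
Qed.

Lemma self_similar_factors_through_base {D : C} (g : Hom D T) (s : Hom D D) (z : Hom D one) :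
  g = a \o' (g \o' s) -> g = iota None \o' z.
Proof.
  intros Eg.
  destruct (coproduct_pullbacks HC (countable_option countable_nat) HT g)
    as [P [p [q [Hpb HD]]]].
  apply (coproduct_hom_ext HD). intros o. destruct (Hpb o) as [Eo _]. destruct o as [n|].
  - apply initial_hom_unique.
    apply (shift_iter_avoids n (g \o' (endo_iter s (S n) \o' q (Some n))) (p (Some n))).
    rewrite (comp_assoc g), (comp_assoc (endo_iter a (S n))), <- (self_similar_iterate g s a Eg).
    symmetry. exact Eo.
  - rewrite <- Eo, <- comp_assoc. f_equal. apply (terminal_hom_unique Hone).
Qed.

(* The solution is a^k ∘ [chain_map k] on [chain k] and the point on the rest R. *)
Lemma shift_cia : is_cia_Id a.
Proof.
  intros X Q l r Hlr e.
  destruct (chain_union_injection HC Hlr e) as [U [s [h [Hs [Hh [R [rest Hrest]]]]]]].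
  destruct (rest_invariant HC Hlr e Hs Hh Hrest) as [sg Hsg].
  destruct (Hone R) as [z _].
  destruct (Hs T (fun k => endo_iter a k \o' chain_map HC Hlr e k)) as [sol_U [Hsol_U _]].
  destruct (Hrest T sol_U (iota None \o' z)) as [sol [[Hsol_h Hsol_rest] _]].
  assert (Hsol_chain : forall k,
             sol \o' chain_incl HC Hlr e k = endo_iter a k \o' chain_map HC Hlr e k).
  { intros k. rewrite <- Hh, comp_assoc, Hsol_h. apply Hsol_U. }
  assert (Hunique : forall sol' : Hom X T,
    (forall k, sol' \o' chain_incl HC Hlr e k = endo_iter a k \o' chain_map HC Hlr e k) ->
    sol' \o' rest = iota None \o' z -> sol' = sol).
  { intros sol' H1 H2. apply (bincoproduct_hom_ext Hrest).
    - apply (coproduct_hom_ext Hs). intros k. rewrite <- !comp_assoc, Hh, H1, Hsol_chain.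
      reflexivity.
    - rewrite H2, Hsol_rest. reflexivity. }
  exists sol. split.
  - intros c Hcl Hcr. symmetry. apply Hunique.
    + intros [|k].
      * exact (copair_on_chain_zero HC Hlr e a c Hcr).
      * exact (copair_on_chain_succ HC Hlr e a sol c k Hcl (Hsol_chain k)).
    + rewrite <- comp_assoc, Hsg, !comp_assoc, Hcl, <- (comp_assoc a sol), Hsol_rest,
        comp_assoc, Ha_none.
      assoc_r. f_equal. apply (terminal_hom_unique Hone).
  - intros sol' Hsol'. symmetry. apply Hunique.
    + exact (solution_on_chain HC Hlr e a sol' Hsol').
    + apply (self_similar_factors_through_base _ sg).
      destruct (Hlr T (a \o' sol') (idm T)) as [c [[Hcl Hcr] _]].
      rewrite (Hsol' c Hcl Hcr) at 1.
      rewrite <- comp_assoc, Hsg, !comp_assoc, Hcl. assoc_r. reflexivity.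
Qed.

Lemma shift_free_cia : is_free_cia_Id a (iota (Some 0)).
Proof.
  split; [exact shift_cia|].
  intros B b Hb f.
  destruct (bincoproduct_exists HC one B) as [Q [l [r Hlr]]].
  destruct (cia_unique_fixed_point Hb Hlr) as [x [Hx Ux]].
  destruct (HT B (fun o => match o return Hom (option_family (fun _ => Y) one o) B with
                           | Some n => endo_iter b n \o' f
                           | None => x
                           end)) as [h [Hh _]].
  exists h. split; [split|].
  - apply (coproduct_hom_ext HT). intros [n|].
    + exact (shift_iterate_semiconj (j := fun n => iota (Some n)) Ha_some h b f
               (fun n => Hh (Some n)) n).
    + rewrite <- !comp_assoc, Ha_none, (Hh None). symmetry. exact Hx.
  - rewrite (Hh (Some 0)). apply comp_id_l.
  - intros h' [Ha' Heta]. apply (coproduct_hom_ext HT). intros [n|]; rewrite Hh; symmetry.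
    + transitivity (endo_iter b n \o' (h' \o' iota (Some 0))).
      * exact (shift_semiconj (j := fun n => iota (Some n)) Ha_some h' b Ha' n).
      * rewrite Heta. reflexivity.
    + symmetry. apply Ux. rewrite comp_assoc, <- Ha', <- comp_assoc.
      exact (f_equal (comp h') Ha_none).
Qed.

End ShiftAlgebra.

Theorem mainTheorem12
  (C : Category)
  (HC : hyper_extensive C)
  (Hprod : has_binary_products C)
  (one : C) (Hone : is_terminal one)
  (N : C) (inj : nat -> Hom one N)
  (HN : is_coproduct (fun _ : nat => one) N inj)
  (succ : Hom N N) (Hsucc : forall n, succ \o' inj n = inj (S n)) :
  is_NNO (inj 0) succ /\
  forall Y : C,
    exists (T : C) (a : Hom T T) (eta : Hom Y T),
      is_free_cia_Id a eta /\
      forall (P : C) (p1 : Hom P N) (p2 : Hom P Y), is_binproduct p1 p2 ->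
      forall (Q : C) (l : Hom P Q) (r : Hom one Q), is_bincoproduct l r ->
        isomorphic T Q.
Proof.
  split; [exact (coproduct_shift_NNO HN Hsucc)|].
  intros Y.
  destruct (proj1 HC (option nat) (countable_option countable_nat)
              (option_family (fun _ : nat => Y) one)) as [T [iota HT]].
  destruct (option_shift_exists HT) as [a [Ha_some Ha_none]].
  exists T, a, (iota (Some 0)). split.
  - exact (shift_free_cia HC Hone HT Ha_some Ha_none).
  - intros P p1 p2 Hp Q l r Hlr.
    destruct (product_with_copower HC Hone HN Hp) as [q Hq].
    exact (coproducts_isomorphic HT (option_coproduct Hq Hlr)).
Qed.
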